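(* Let $B:\mathbb{N}\to(0,\infty)$ and let $(p_N)_{N\in\mathbb{N}}$ be a sequence of monic univariate complex polynomials, $p_N$ of degree $N$, with $\mu_{\rm norm}(p_N)\le B(N)$ for all $N$. Let $\omega_N=\{x_1,\dots,x_N\}\subset\mathbb{S}^2$ be the points with $\pi_{\mathbb{S}^2}(x_i)=z_i$, $z_1,\dots,z_N$ the roots of $p_N$. Then $$\mathcal{E}_{\log}(\omega_N)\le \kappa N^2-N\log\Big(\frac{\sqrt{N(N+1)}}{2}\Big)+N\log B(N),$$ where $\kappa=\frac12-\log 2$.
   Context: $\mathbb{S}^2\subset\mathbb{R}^3$ is the unit sphere; $\pi_{\mathbb{S}^2}(a,b,c)=\frac{a+ib}{1-c}$ is the stereographic projection from the North pole. $\mathcal{E}_{\log}(\{x_1,\dots,x_N\})=-\sum_{i\ne j}\log\|x_i-x_j\|$. Bombieri–Weyl norm: $\|\sum_{i=0}^N a_iz^i\|=(\sum_i\binom{N}{i}^{-1}|a_i|^2)^{1/2}$. For a root $z$ of a degree-$N$ polynomial $P$, $\mu_{\rm norm}(P,z)=N^{1/2}\|P\|(1+|z|^2)^{N/2-1}/|P'(z)|$ ($=\infty$ at multiple roots) and $\mu_{\rm norm}(P)=\max_{P(z)=0}\mu_{\rm norm}(P,z)$. Note $\kappa=\int\int\log|x-y|^{-1}d\sigma(x)d\sigma(y)$ with $\sigma$ the normalized surface measure on $\mathbb{S}^2$. *)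

From Stdlib Require Import Reals List.
Open Scope R_scope.

Definition Cpx : Type := (R * R)%type.
Definition Cre (z : Cpx) : R := fst z.
Definition Cim (z : Cpx) : R := snd z.
Definition C0 : Cpx := (0, 0).
Definition C1 : Cpx := (1, 0).
Definition Cadd (z w : Cpx) : Cpx := (Cre z + Cre w, Cim z + Cim w).
Definition Csub (z w : Cpx) : Cpx := (Cre z - Cre w, Cim z - Cim w).
Definition Cmul (z w : Cpx) : Cpx :=
  (Cre z * Cre w - Cim z * Cim w, Cre z * Cim w + Cim z * Cre w).
Definition Cscal (r : R) (z : Cpx) : Cpx := (r * Cre z, r * Cim z).
Fixpoint Cpow (z : Cpx) (n : nat) : Cpx :=
  match n with O => C1 | S m => Cmul z (Cpow z m) end.
Definition Cnorm2 (z : Cpx) : R := Cre z * Cre z + Cim z * Cim z.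
Definition Cabs (z : Cpx) : R := sqrt (Cnorm2 z).

Fixpoint Csum (f : nat -> Cpx) (n : nat) : Cpx :=
  match n with O => C0 | S m => Cadd (Csum f m) (f m) end.
Fixpoint Rsum (f : nat -> R) (n : nat) : R :=
  match n with O => 0 | S m => Rsum f m + f m end.

(** A degree-N polynomial P = sum_{i=0}^N a_i z^i is given by its degree N and
    coefficient function a (values a i for i > N are irrelevant). *)
Definition peval (N : nat) (a : nat -> Cpx) (z : Cpx) : Cpx :=
  Csum (fun i => Cmul (a i) (Cpow z i)) (S N).

Definition pderiv_eval (N : nat) (a : nat -> Cpx) (z : Cpx) : Cpx :=
  Csum (fun i => Cscal (INR (S i)) (Cmul (a (S i)) (Cpow z i))) N.

Definition monic_deg (N : nat) (a : nat -> Cpx) : Prop := a N = C1.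

Definition BW_norm (N : nat) (a : nat -> Cpx) : R :=
  sqrt (Rsum (fun i => Cnorm2 (a i) / Binomial.C N i) (S N)).

Definition mu_norm_at (N : nat) (a : nat -> Cpx) (z : Cpx) : R :=
  sqrt (INR N) * BW_norm N a * Rpower (1 + Cnorm2 z) (INR N / 2 - 1)
  / Cabs (pderiv_eval N a z).

(** mu_norm(P) <= b, with the convention mu_norm(P,z) = +infinity at multiple
    roots: every root is simple and mu_norm(P,z) <= b there. *)
Definition mu_norm_le (N : nat) (a : nat -> Cpx) (b : R) : Prop :=
  forall z : Cpx, peval N a z = C0 ->
    pderiv_eval N a z <> C0 /\ mu_norm_at N a z <= b.

(** zs is the list of roots of P (with multiplicity): P(z) = prod (z - zs_i). *)
Definition Cprod_lin (zs : list Cpx) (z : Cpx) : Cpx :=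
  fold_right (fun r acc => Cmul (Csub z r) acc) C1 zs.
Definition roots_of (N : nat) (a : nat -> Cpx) (zs : list Cpx) : Prop :=
  length zs = N /\ forall z : Cpx, peval N a z = Cprod_lin zs z.

Definition R3 : Type := (R * R * R)%type.
Definition on_sphere (x : R3) : Prop :=
  let '(a, b, c) := x in a * a + b * b + c * c = 1.
Definition dist3 (x y : R3) : R :=
  let '(a, b, c) := x in let '(a', b', c') := y in
  sqrt ((a - a') * (a - a') + (b - b') * (b - b') + (c - c') * (c - c')).

(** Stereographic projection from the North pole (defined for c <> 1). *)
Definition stereo (x : R3) : Cpx :=
  let '(a, b, c) := x in (a / (1 - c), b / (1 - c)).
Definition not_north (x : R3) : Prop := let '(_, _, c) := x in c <> 1.

Definition stereo_preimage (zs : list Cpx) (xs : list R3) : Prop :=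
  length xs = length zs /\
  forall i : nat, (i < length zs)%nat ->
    on_sphere (nth i xs (0,0,0)) /\ not_north (nth i xs (0,0,0)) /\
    stereo (nth i xs (0,0,0)) = nth i zs C0.

Definition E_log (xs : list R3) : R :=
  - Rsum (fun i => Rsum (fun j =>
        if Nat.eq_dec i j then 0
        else ln (dist3 (nth i xs (0,0,0)) (nth j xs (0,0,0)))) (length xs))
      (length xs).

(** kappa = 1/2 - log 2 (value of the continuous log-energy of sigma on S^2). *)
Definition kappa : R := / 2 - ln 2.

(* Under stereographic projection the chordal distance satisfies
   log |x_i - x_j| = log 2 + log |z_i - z_j| - (l_i + l_j) / 2 with l_i = log (1 + |z_i|^2),
   and prod_(j <> i) |z_i - z_j| = |p'(z_i)| for the monic p, so the energy equals
   - sum_i log |p'(z_i)| - N (N - 1) log 2 + (N - 1) sum_i l_i.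
   The bound on mu_norm gives log |p'(z_i)| >= log (sqrt N ||p|| / B) + (N/2 - 1) l_i, which
   leaves (N/2) sum_i l_i to control.  Reflecting in the circle of radius sqrt rho the roots
   lying inside it shows prod_i max(rho, |z_i|^2) <= sum_j |a_j|^2 rho^j; after the
   substitution rho = t / (1 - t) the right side is a Bernstein polynomial with integral
   ||p||^2 / (N + 1) over [0, 1], while int_0^1 log max(t, s (1 - t)) dt = log (1 + s) - 1.
   Jensen's inequality for log then gives sum_i l_i <= N + 2 log ||p|| - log (N + 1). *)

From Pilot Require Import Defs.
From Stdlib Require Import Reals Lra Lia Psatz Factorial List.
From Coquelicot Require Import Coquelicot.
Open Scope R_scope.

Fixpoint Rprod (f : nat -> R) (n : nat) : R :=
  match n with O => 1 | S m => Rprod f m * f m end.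

Lemma Rsum_ext (f g : nat -> R) n :
  (forall i, (i < n)%nat -> f i = g i) -> Rsum f n = Rsum g n.
Proof.
induction n as [|n IH]; intros H; simpl; [reflexivity|].
rewrite IH by (intros; apply H; lia). now rewrite H by lia.
Qed.

Lemma Rsum_le (f g : nat -> R) n :
  (forall i, (i < n)%nat -> f i <= g i) -> Rsum f n <= Rsum g n.
Proof.
induction n as [|n IH]; intros H; simpl; [lra|].
assert (f n <= g n) by (apply H; lia).
assert (Rsum f n <= Rsum g n) by (apply IH; intros; apply H; lia). lra.
Qed.

Lemma Rsum_plus (f g : nat -> R) n : Rsum (fun i => f i + g i) n = Rsum f n + Rsum g n.
Proof. induction n as [|n IH]; simpl; [ring | rewrite IH; ring]. Qed.

Lemma Rsum_scal k (f : nat -> R) n : Rsum (fun i => k * f i) n = k * Rsum f n.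
Proof. induction n as [|n IH]; simpl; [ring | rewrite IH; ring]. Qed.

Lemma Rsum_mult_r (f : nat -> R) k n : Rsum f n * k = Rsum (fun i => f i * k) n.
Proof. induction n as [|n IH]; simpl; [ring | rewrite <- IH; ring]. Qed.

Lemma Rsum_const k n : Rsum (fun _ => k) n = INR n * k.
Proof. induction n as [|n IH]; [simpl; ring|]. rewrite S_INR. simpl. rewrite IH. ring. Qed.

Lemma Rsum_nonneg (f : nat -> R) n : (forall i, (i < n)%nat -> 0 <= f i) -> 0 <= Rsum f n.
Proof. intros H. rewrite <- (Rmult_0_r (INR n)), <- Rsum_const. now apply Rsum_le. Qed.

Lemma Rsum_skip (f : nat -> R) i n : (i < n)%nat ->
  Rsum (fun j => if Nat.eq_dec i j then 0 else f j) n = Rsum f n - f i.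
Proof.
induction n as [|n IH]; intros Hi; [lia|]. simpl.
destruct (Nat.eq_dec i n) as [->|Hn].
- rewrite (Rsum_ext _ f); [ring|]. intros j Hj. destruct (Nat.eq_dec n j); [lia | reflexivity].
- rewrite IH by lia. ring.
Qed.

Lemma Rprod_ext (f g : nat -> R) n :
  (forall i, (i < n)%nat -> f i = g i) -> Rprod f n = Rprod g n.
Proof.
induction n as [|n IH]; intros H; simpl; [reflexivity|].
rewrite IH by (intros; apply H; lia). now rewrite H by lia.
Qed.

Lemma Rprod_mult_pow (f : nat -> R) k n : Rprod f n * k ^ n = Rprod (fun i => f i * k) n.
Proof. induction n as [|n IH]; simpl; [ring | rewrite <- IH; ring]. Qed.

Lemma Rprod_neq0 (f : nat -> R) n : Rprod f n <> 0 -> forall j, (j < n)%nat -> f j <> 0.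
Proof.
induction n as [|n IH]; intros H j Hj; [lia|]. simpl in H.
destruct (Nat.eq_dec j n) as [->|Hjn].
- intros E; apply H; rewrite E; ring.
- apply IH; [intros E; apply H; rewrite E; ring | lia].
Qed.

Lemma Rprod_pos (f : nat -> R) n : (forall i, (i < n)%nat -> 0 < f i) -> 0 < Rprod f n.
Proof.
induction n as [|n IH]; intros H; simpl; [lra|].
apply Rmult_lt_0_compat; [apply IH; intros; apply H | apply H]; lia.
Qed.

Lemma ln_Rprod (f : nat -> R) n :
  (forall i, (i < n)%nat -> 0 < f i) -> ln (Rprod f n) = Rsum (fun i => ln (f i)) n.
Proof.
induction n as [|n IH]; intros H; simpl; [apply ln_1|].
rewrite ln_mult, IH by (try apply Rprod_pos; intros; apply H; lia). reflexivity.
Qed.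

Lemma is_RInt_eq (f : R -> R) a b l l' : is_RInt f a b l -> l = l' -> is_RInt f a b l'.
Proof. now intros H <-. Qed.

(* [auto_derive] leaves [INR (S n)] unfolded to its defining [match]. *)
Ltac fold_INR_S n := change (match n with 0%nat => 1 | S _ => INR n + 1 end) with (INR (S n)).

(* Integration by parts lowers the exponent of [1 - t]. *)
Lemma is_RInt_beta k : forall j,
  is_RInt (fun t => t ^ j * (1 - t) ^ k) 0 1
    (INR (fact j) * INR (fact k) / INR (fact (j + k + 1))).
Proof.
induction k as [|k IH]; intros j.
- eapply is_RInt_eq.
  + apply (is_RInt_derive (fun t => t ^ S j / INR (S j))).
    * intros x _. auto_derive; [easy|].
      fold_INR_S j. cbn [pow]. field. apply not_0_INR; lia.
    * intros x _. apply (ex_derive_continuous (V:=R_CompleteNormedModule)). auto_derive. auto.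
  + rewrite Nat.add_0_r, Nat.add_1_r, fact_simpl, mult_INR, pow1, pow_i, S_INR by lia.
    pose proof (INR_fact_lt_0 j). pose proof (pos_INR j).
    unfold minus, plus, opp; simpl. field; repeat split; lra.
- pose (F t := t ^ S j * (1 - t) ^ S k).
  assert (Hparts : is_RInt (fun t => INR (S j) * (t ^ j * (1 - t) ^ S k)
                                    - INR (S k) * (t ^ S j * (1 - t) ^ k)) 0 1 0).
  { eapply is_RInt_eq.
    + apply (is_RInt_derive F).
      * intros x _. unfold F. auto_derive; [easy|].
        fold_INR_S j. fold_INR_S k. rewrite !S_INR. cbn [pow]. unfold Rminus. ring.
      * intros x _. apply (ex_derive_continuous (V:=R_CompleteNormedModule)). auto_derive. auto.
    + unfold F, minus, plus, opp; simpl. ring. }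
  eapply is_RInt_ext; [|eapply is_RInt_eq;
    [exact (is_RInt_scal _ _ _ (/ INR (S j)) _
             (is_RInt_plus _ _ _ _ _ _ Hparts (is_RInt_scal _ _ _ (INR (S k)) _ (IH (S j)))))|]].
  + intros x _. unfold scal, plus; simpl; unfold mult; simpl.
    field. fold_INR_S j. apply not_0_INR; lia.
  + replace (S j + k + 1)%nat with (S (j + k + 1)) by lia.
    replace (j + S k + 1)%nat with (S (j + k + 1)) by lia.
    rewrite !fact_simpl, !mult_INR, !S_INR.
    pose proof (pos_INR j). pose proof (pos_INR (j + k + 1)).
    pose proof (INR_fact_lt_0 (j + k + 1)).
    unfold scal, plus; simpl; unfold mult; simpl. field; repeat split; lra.
Qed.

Lemma ln_le_sub_1 x : 0 < x -> ln x <= x - 1.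
Proof. intros Hx. pose proof (exp_ineq1_le (ln x)). rewrite exp_ln in H by lra. lra. Qed.

Lemma ln_le_compat x y : 0 < x -> x <= y -> ln x <= ln y.
Proof. intros Hx [Hlt | ->]; [left; now apply ln_increasing | lra]. Qed.

Lemma is_RInt_ln a : 0 < a <= 1 -> is_RInt ln a 1 (a - a * ln a - 1).
Proof.
intros Ha. eapply is_RInt_eq.
- apply (is_RInt_derive (fun t => t * ln t - t)).
  + intros x Hx. rewrite Rmin_left, Rmax_right in Hx by lra.
    auto_derive; [lra|]. field. lra.
  + intros x Hx. rewrite Rmin_left, Rmax_right in Hx by lra.
    apply continuity_pt_filterlim, derivable_continuous_pt.
    exists (/ x). apply derivable_pt_lim_ln. lra.
- rewrite ln_1. unfold minus, plus, opp; simpl. ring.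
Qed.

Lemma is_RInt_ln_compl s a b : 0 < s -> a <= b < 1 ->
  is_RInt (fun t => ln (s * (1 - t))) a b
    ((1 - a) * ln (s * (1 - a)) + a - (1 - b) * ln (s * (1 - b)) - b).
Proof.
intros Hs Hab. eapply is_RInt_eq.
- apply (is_RInt_derive (fun t => - (1 - t) * ln (s * (1 - t)) - t)).
  + intros x Hx. rewrite Rmin_left, Rmax_right in Hx by lra.
    assert (0 < s * (1 - x)) by nra.
    auto_derive; [lra|]. unfold Rminus. field. lra.
  + intros x Hx. rewrite Rmin_left, Rmax_right in Hx by lra.
    assert (0 < s * (1 - x)) by nra.
    apply (ex_derive_continuous (V:=R_CompleteNormedModule)). auto_derive. lra.
- unfold minus, plus, opp; simpl. ring.
Qed.

Lemma compl_le_iff s t : 0 <= s -> (s * (1 - t) <= t <-> s / (1 + s) <= t).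
Proof.
intros Hs. unfold Rdiv. split; intros H.
- apply Rmult_le_reg_r with (1 + s); [lra|].
  rewrite Rmult_assoc, Rinv_l by lra. lra.
- apply Rmult_le_compat_r with (r := 1 + s) in H; [|lra].
  rewrite Rmult_assoc, Rinv_l in H by lra. lra.
Qed.

(* The cutoff [d] keeps the integral proper; over all of [0, 1] it equals [ln (1 + s) - 1]. *)
Lemma is_RInt_ln_max_ge s d : 0 <= s -> 0 < d <= / 2 ->
  exists V, is_RInt (fun t => ln (Rmax t (s * (1 - t)))) d 1 V /\
            ln (1 + s) - 1 - d * (s + 2) <= V.
Proof.
intros Hs Hd. set (u := s / (1 + s)).
assert (Hu : 0 <= u < 1).
{ assert (u * (1 + s) = s) by (unfold u; field; lra). nra. }
assert (Hmax_l : forall t, u <= t -> Rmax t (s * (1 - t)) = t).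
{ intros t Ht. apply Rmax_left, compl_le_iff; assumption. }
destruct (Rle_lt_dec d u) as [Hdu|Hud].
- assert (Hspos : 0 < s) by (destruct Hs as [|<-]; [assumption | unfold u in Hdu; lra]).
  assert (Hsu : s * (1 - u) = u) by (unfold u; field; lra).
  eexists; split.
  + apply (is_RInt_Chasles _ d u 1).
    * eapply is_RInt_ext; [|exact (is_RInt_ln_compl s d u Hspos ltac:(lra))].
      intros t Ht. rewrite Rmin_left, Rmax_right in Ht by lra. cbv beta.
      rewrite Rmax_right; [reflexivity|].
      destruct (Rle_lt_dec (s * (1 - t)) t) as [Hle|]; [|lra].
      apply compl_le_iff in Hle; [fold u in Hle; lra | assumption].
    * eapply is_RInt_ext; [|exact (is_RInt_ln u ltac:(lra))].
      intros t Ht. rewrite Rmin_left, Rmax_right in Ht by lra. cbv beta. now rewrite Hmax_l by lra.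
  + assert (u > 0) by (unfold u; apply Rdiv_lt_0_compat; lra).
    rewrite Hsu. unfold plus; simpl.
    assert (Hlnu : ln u = ln s - ln (1 + s)).
    { unfold u, Rdiv. rewrite ln_mult, ln_Rinv by (try apply Rinv_0_lt_compat; lra). ring. }
    rewrite ln_mult, Hlnu by lra.
    pose proof (ln_le_sub_1 s Hspos).
    assert (H1d : (1 - d) * ln (1 - d) >= - d).
    { pose proof (ln_le_sub_1 (/ (1 - d)) ltac:(apply Rinv_0_lt_compat; lra)) as Hinv.
      rewrite ln_Rinv in Hinv by lra.
      apply Rmult_le_compat_l with (r := 1 - d) in Hinv; [|lra].
      replace ((1 - d) * (/ (1 - d) - 1)) with d in Hinv by (field; lra). lra. }
    nra.
- eexists; split.
  + eapply is_RInt_ext; [|exact (is_RInt_ln d ltac:(lra))].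
    intros t Ht. rewrite Rmin_left, Rmax_right in Ht by lra. cbv beta. now rewrite Hmax_l by lra.
  + assert (Hs2 : s * (1 - d) <= d) by (apply compl_le_iff; fold u; lra).
    pose proof (ln_le_sub_1 d ltac:(lra)).
    pose proof (ln_le_sub_1 (1 + s) ltac:(lra)).
    nra.
Qed.

(* Jensen's inequality for [ln] on [0, 1], from [ln y <= ln c + y / c - 1]; on [0, d] only
   [h >= 0] is used. *)
Lemma is_RInt_le_ln_integral (f h : R -> R) d V c :
  0 < d < 1 -> 0 < c -> is_RInt f d 1 V -> is_RInt h 0 1 c ->
  (forall t, 0 < t < d -> 0 <= h t) ->
  (forall t, d < t < 1 -> 0 < h t /\ f t <= ln (h t)) ->
  V <= ln c - d * (ln c - 1).
Proof.
intros Hd Hc HV Hh Hh0 Hfh.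
assert (Hex : ex_RInt h 0 1) by (eexists; exact Hh).
assert (Hex0 : ex_RInt h 0 d)
  by (apply (ex_RInt_Chasles_1 (V:=R_CompleteNormedModule) _ _ _ 1); [lra | exact Hex]).
assert (Hex1 : ex_RInt h d 1)
  by (apply (ex_RInt_Chasles_2 (V:=R_CompleteNormedModule) _ 0); [lra | exact Hex]).
assert (Hsplit : RInt h 0 d + RInt h d 1 = c).
{ rewrite <- (is_RInt_unique _ _ _ _ Hh).
  exact (RInt_Chasles (V:=R_CompleteNormedModule) h 0 d 1 Hex0 Hex1). }
assert (Hhead : 0 <= RInt h 0 d) by (apply RInt_ge_0; [lra | exact Hex0 | exact Hh0]).
assert (Hmajor : is_RInt (fun t => (ln c - 1) + / c * h t) d 1
                   ((1 - d) * (ln c - 1) + / c * RInt h d 1)).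
{ eapply is_RInt_eq.
  - apply (is_RInt_plus (fun _ => ln c - 1) (fun t => / c * h t)).
    + apply is_RInt_const.
    + apply (is_RInt_scal h), (RInt_correct (V:=R_CompleteNormedModule)), Hex1.
  - unfold scal, plus; simpl; unfold mult; simpl. ring. }
assert (HVle : V <= (1 - d) * (ln c - 1) + / c * RInt h d 1).
{ apply (is_RInt_le _ _ d 1 _ _ ltac:(lra) HV Hmajor).
  intros t Ht. destruct (Hfh t Ht) as [Hht Hft].
  pose proof (ln_le_sub_1 (h t / c) ltac:(apply Rdiv_lt_0_compat; lra)) as Hln.
  unfold Rdiv in Hln. rewrite ln_mult, ln_Rinv in Hln by (try apply Rinv_0_lt_compat; lra).
  lra. }
assert (/ c * RInt h d 1 <= 1).
{ apply Rmult_le_reg_l with c; [lra|]. rewrite <- Rmult_assoc, Rinv_r by lra. lra. }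
lra.
Qed.

Lemma le_of_forall_le_add_mul x y M e :
  0 < e -> (forall d, 0 < d <= e -> x <= y + d * M) -> x <= y.
Proof.
intros He H. apply Rnot_lt_le. intros Hyx.
set (d := Rmin e ((x - y) / (Rabs M + 1))).
assert (Hd : 0 < d <= e).
{ split; [apply Rmin_glb_lt; [lra | apply Rdiv_lt_0_compat; pose proof (Rabs_pos M); lra]
        | apply Rmin_l]. }
assert (Hdx : d * (Rabs M + 1) <= x - y).
{ pose proof (Rmin_r e ((x - y) / (Rabs M + 1))) as Hr. fold d in Hr.
  apply Rmult_le_compat_r with (r := Rabs M + 1) in Hr; [|pose proof (Rabs_pos M); lra].
  unfold Rdiv in Hr. rewrite Rmult_assoc, Rinv_l in Hr by (pose proof (Rabs_pos M); lra). lra. }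
pose proof (H d Hd). pose proof (Rle_abs M). nra.
Qed.

Lemma is_RInt_sum_ln_max_ge (s : nat -> R) d n :
  (forall i, (i < n)%nat -> 0 <= s i) -> 0 < d <= / 2 ->
  exists V, is_RInt (fun t => Rsum (fun i => ln (Rmax t (s i * (1 - t)))) n) d 1 V /\
            Rsum (fun i => ln (1 + s i) - 1) n - d * Rsum (fun i => s i + 2) n <= V.
Proof.
intros Hs Hd. induction n as [|n IH].
- exists 0. split; [|simpl; lra].
  change (is_RInt (fun _ => 0) d 1 0). eapply is_RInt_eq; [apply is_RInt_const|].
  unfold scal; simpl; unfold mult; simpl. ring.
- destruct IH as [V1 [HV1 Hle1]]; [intros; apply Hs; lia|].
  destruct (is_RInt_ln_max_ge (s n) d (Hs n ltac:(lia)) Hd) as [V2 [HV2 Hle2]].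
  exists (V1 + V2). split; [|simpl; nra].
  exact (is_RInt_plus _ (fun t => ln (Rmax t (s n * (1 - t)))) _ _ _ _ HV1 HV2).
Qed.

Lemma sum_ln_1p_le_ln_integral (s : nat -> R) (h : R -> R) c n :
  (forall i, (i < n)%nat -> 0 <= s i) -> is_RInt h 0 1 c -> 0 < c ->
  (forall t, 0 < t < 1 -> Rprod (fun i => Rmax t (s i * (1 - t))) n <= h t) ->
  Rsum (fun i => ln (1 + s i) - 1) n <= ln c.
Proof.
intros Hs Hh Hc Hprod.
assert (Hmax_pos : forall t, 0 < t -> forall i, (i < n)%nat -> 0 < Rmax t (s i * (1 - t))).
{ intros t Ht i _. apply Rlt_le_trans with t; [lra | apply Rmax_l]. }
apply (le_of_forall_le_add_mul _ _ (Rsum (fun i => s i + 2) n - ln c + 1) (/ 2));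
  [lra|].
intros d Hd.
destruct (is_RInt_sum_ln_max_ge s d n Hs Hd) as [V [HV Hle]].
enough (V <= ln c - d * (ln c - 1)) by lra.
apply (is_RInt_le_ln_integral _ h d V c ltac:(lra) Hc HV Hh).
- intros t Ht. apply Rle_trans with (2 := Hprod t ltac:(lra)).
  apply Rlt_le, Rprod_pos, Hmax_pos; lra.
- intros t Ht.
  assert (Hpos : 0 < Rprod (fun i => Rmax t (s i * (1 - t))) n)
    by (apply Rprod_pos, Hmax_pos; lra).
  split; [pose proof (Hprod t ltac:(lra)); lra|].
  rewrite <- ln_Rprod by (apply Hmax_pos; lra).
  apply ln_le_compat; [exact Hpos | apply Hprod; lra].
Qed.

Lemma is_RInt_Rsum (f : nat -> R -> R) (I : nat -> R) a b n :
  (forall j, (j < n)%nat -> is_RInt (f j) a b (I j)) ->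
  is_RInt (fun t => Rsum (fun j => f j t) n) a b (Rsum I n).
Proof.
induction n as [|n IH]; intros H; simpl.
- eapply is_RInt_eq; [apply is_RInt_const|]. unfold scal; simpl; unfold mult; simpl. ring.
- apply (is_RInt_plus (fun t => Rsum (fun j => f j t) n) (f n)).
  + apply IH. intros; apply H; lia.
  + apply H; lia.
Qed.

Lemma Binomial_pos n j : 0 < Binomial.C n j.
Proof.
unfold Binomial.C. apply Rdiv_lt_0_compat; [|apply Rmult_lt_0_compat]; apply INR_fact_lt_0.
Qed.

Lemma is_RInt_bernstein (w : nat -> R) N :
  is_RInt (fun t => Rsum (fun j => w j * (t ^ j * (1 - t) ^ (N - j))) (S N)) 0 1
    (Rsum (fun j => w j / Binomial.C N j) (S N) / (INR N + 1)).
Proof.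
eapply is_RInt_eq.
- apply (is_RInt_Rsum (fun j t => w j * (t ^ j * (1 - t) ^ (N - j)))).
  intros j _. apply (is_RInt_scal (fun t => t ^ j * (1 - t) ^ (N - j))), is_RInt_beta.
- unfold Rdiv at 2. rewrite Rsum_mult_r. apply Rsum_ext. intros j Hj.
  replace (j + (N - j) + 1)%nat with (S N) by lia.
  rewrite fact_simpl, mult_INR, S_INR. unfold Binomial.C, scal; simpl; unfold mult; simpl.
  pose proof (INR_fact_lt_0 N). pose proof (INR_fact_lt_0 j).
  pose proof (INR_fact_lt_0 (N - j)). pose proof (pos_INR N).
  field. repeat split; lra.
Qed.

Lemma ln_sqrt x : 0 < x -> ln (sqrt x) = ln x / 2.
Proof.
intros Hx. assert (0 < sqrt x) by (apply sqrt_lt_R0; lra).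
rewrite <- (sqrt_sqrt x) at 2 by lra. rewrite ln_mult by lra. field.
Qed.

Lemma Cnorm2_nonneg z : 0 <= Cnorm2 z.
Proof. unfold Cnorm2. nra. Qed.

Lemma Cnorm2_pos z : z <> C0 -> 0 < Cnorm2 z.
Proof.
destruct z as [x y]. unfold Cnorm2, Cre, Cim; simpl. intros H.
destruct (Req_dec x 0) as [->|]; destruct (Req_dec y 0) as [->|]; try nra.
exfalso. now apply H.
Qed.

Lemma Csub_neq0 z w : z <> w -> Csub z w <> C0.
Proof.
destruct z as [x y], w as [x' y']. unfold Csub, C0, Cre, Cim; simpl.
intros H E. injection E as E1 E2. apply H. f_equal; lra.
Qed.

Lemma Cabs_pos z : z <> C0 -> 0 < Cabs z.
Proof. intros H. apply sqrt_lt_R0, Cnorm2_pos, H. Qed.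

Lemma ln_Cabs z : z <> C0 -> ln (Cabs z) = ln (Cnorm2 z) / 2.
Proof. intros H. apply ln_sqrt, Cnorm2_pos, H. Qed.

Lemma sphere_height_lt_1 a b c : on_sphere (a, b, c) -> not_north (a, b, c) -> c < 1.
Proof. unfold on_sphere, not_north. intros Hs Hn. destruct (Rle_lt_dec 1 c); [nra | lra]. Qed.

Lemma one_add_Cnorm2_stereo a b c : on_sphere (a, b, c) -> not_north (a, b, c) ->
  1 + Cnorm2 (stereo (a, b, c)) = 2 / (1 - c).
Proof.
intros Hs Hn. pose proof (sphere_height_lt_1 _ _ _ Hs Hn). unfold on_sphere in Hs.
unfold stereo, Cnorm2, Cre, Cim; simpl.
replace (a / (1 - c) * (a / (1 - c)) + b / (1 - c) * (b / (1 - c)))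
  with ((a * a + b * b) / ((1 - c) * (1 - c))) by (field; lra).
replace (a * a + b * b) with ((1 - c) * (1 + c)) by lra. field. lra.
Qed.

Lemma sq_chord_stereo a b c a' b' c' :
  on_sphere (a, b, c) -> not_north (a, b, c) -> on_sphere (a', b', c') -> not_north (a', b', c') ->
  (a - a') * (a - a') + (b - b') * (b - b') + (c - c') * (c - c')
  = (1 - c) * (1 - c') * Cnorm2 (Csub (stereo (a, b, c)) (stereo (a', b', c'))).
Proof.
intros Hs Hn Hs' Hn'.
pose proof (sphere_height_lt_1 _ _ _ Hs Hn). pose proof (sphere_height_lt_1 _ _ _ Hs' Hn').
unfold on_sphere in Hs, Hs'. unfold stereo, Cnorm2, Csub, Cre, Cim; simpl.
replace ((1 - c) * (1 - c') * ((a / (1 - c) - a' / (1 - c')) * (a / (1 - c) - a' / (1 - c'))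
                             + (b / (1 - c) - b' / (1 - c')) * (b / (1 - c) - b' / (1 - c'))))
  with ((1 - c') / (1 - c) * (a * a + b * b) + (1 - c) / (1 - c') * (a' * a' + b' * b')
        - 2 * (a * a' + b * b')) by (field; lra).
replace (a * a + b * b) with ((1 - c) * (1 + c)) by lra.
replace (a' * a' + b' * b') with ((1 - c') * (1 + c')) by lra.
field_simplify; [nra | lra].
Qed.

Lemma ln_dist3_stereo x y :
  on_sphere x -> not_north x -> on_sphere y -> not_north y -> stereo x <> stereo y ->
  ln (dist3 x y) = ln 2 + ln (Cabs (Csub (stereo x) (stereo y)))
                   - / 2 * ln (1 + Cnorm2 (stereo x)) - / 2 * ln (1 + Cnorm2 (stereo y)).
Proof.
destruct x as [[a b] c], y as [[a' b'] c']. intros Hs Hn Hs' Hn' Hne.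
pose proof (sphere_height_lt_1 _ _ _ Hs Hn). pose proof (sphere_height_lt_1 _ _ _ Hs' Hn').
pose proof (Cnorm2_pos _ (Csub_neq0 _ _ Hne)).
rewrite ln_Cabs, !one_add_Cnorm2_stereo by (apply Csub_neq0 || assumption; assumption).
unfold dist3. rewrite sq_chord_stereo by assumption.
rewrite ln_sqrt by (repeat apply Rmult_lt_0_compat; lra).
unfold Rdiv.
rewrite !ln_mult, !ln_Rinv by (try apply Rmult_lt_0_compat; try apply Rinv_0_lt_compat; lra).
field.
Qed.

Lemma E_log_stereo_preimage N zs xs :
  length zs = N -> stereo_preimage zs xs ->
  (forall i j, (i < N)%nat -> (j < N)%nat -> i <> j -> nth i zs C0 <> nth j zs C0) ->
  E_log xs = - Rsum (fun i => Rsum (fun j => if Nat.eq_dec i j then 0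
                   else ln (Cabs (Csub (nth i zs C0) (nth j zs C0)))) N) N
             - INR N * (INR N - 1) * ln 2
             + (INR N - 1) * Rsum (fun i => ln (1 + Cnorm2 (nth i zs C0))) N.
Proof.
intros HN [Hlen Hpre] Hdist. rewrite HN in Hlen, Hpre.
set (l i := ln (1 + Cnorm2 (nth i zs C0))).
assert (Hrow : forall i, (i < N)%nat ->
  Rsum (fun j => if Nat.eq_dec i j then 0
                 else ln (dist3 (nth i xs (0, 0, 0)) (nth j xs (0, 0, 0)))) N
  = Rsum (fun j => if Nat.eq_dec i j then 0
                   else ln (Cabs (Csub (nth i zs C0) (nth j zs C0)))) N
    + ((INR N - 1) * ln 2 - / 2 * Rsum l N) + - (INR N - 2) / 2 * l i).
{ intros i Hi.
  rewrite (Rsum_ext _ (fun j => (if Nat.eq_dec i j then 0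
                                 else ln (Cabs (Csub (nth i zs C0) (nth j zs C0))))
                              + (if Nat.eq_dec i j then 0 else (ln 2 - / 2 * l i) + - / 2 * l j))).
  - rewrite Rsum_plus, (Rsum_skip (fun j => _ + _)), Rsum_plus, Rsum_const, Rsum_scal
      by exact Hi.
    field.
  - intros j Hj. destruct (Nat.eq_dec i j) as [|Hij]; [ring|].
    destruct (Hpre i Hi) as [Hs [Hn Hzi]]. destruct (Hpre j Hj) as [Hs' [Hn' Hzj]].
    rewrite ln_dist3_stereo, Hzi, Hzj by (rewrite ?Hzi, ?Hzj; auto). unfold l. ring. }
unfold E_log. rewrite Hlen.
rewrite (Rsum_ext _ _ _ Hrow), !Rsum_plus, Rsum_const, Rsum_scal.
fold l. field.
Qed.

(* Substituting [rho = t / (1 - t)] turns the hypothesis into a bound of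
   [prod_i max(t, s_i (1 - t))] by a Bernstein polynomial, whose integral is explicit. *)
Lemma sum_ln_1p_le_of_prod_max_le (s w : nat -> R) N :
  (forall i, (i < N)%nat -> 0 <= s i) ->
  0 < Rsum (fun j => w j / Binomial.C N j) (S N) ->
  (forall rho, 0 < rho ->
     Rprod (fun i => Rmax rho (s i)) N <= Rsum (fun j => w j * rho ^ j) (S N)) ->
  Rsum (fun i => ln (1 + s i)) N
  <= INR N + ln (Rsum (fun j => w j / Binomial.C N j) (S N)) - ln (INR N + 1).
Proof.
intros Hs Hw Hprod.
assert (Hbern : forall t, 0 < t < 1 -> Rprod (fun i => Rmax t (s i * (1 - t))) N
                  <= Rsum (fun j => w j * (t ^ j * (1 - t) ^ (N - j))) (S N)).
{ intros t Ht. set (rho := t / (1 - t)).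
  assert (Ht' : t = rho * (1 - t)) by (unfold rho; field; lra).
  specialize (Hprod rho ltac:(apply Rdiv_lt_0_compat; lra)).
  apply Rmult_le_compat_r with (r := (1 - t) ^ N) in Hprod; [|apply pow_le; lra].
  rewrite Rprod_mult_pow, Rsum_mult_r in Hprod.
  replace (Rprod (fun i => Rmax t (s i * (1 - t))) N)
    with (Rprod (fun i => Rmax rho (s i) * (1 - t)) N).
  - eapply Rle_trans; [exact Hprod|]. right. apply Rsum_ext. intros j Hj.
    replace (t ^ j) with ((rho * (1 - t)) ^ j) by now rewrite <- Ht'.
    replace N with (j + (N - j))%nat at 1 by lia.
    rewrite pow_add, Rpow_mult_distr. ring.
  - apply Rprod_ext. intros i _. rewrite Rmult_comm, <- RmaxRmult by lra.
    f_equal; [rewrite Ht' at 2 |]; ring. }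
assert (HN : 0 < INR N + 1) by (pose proof (pos_INR N); lra).
pose proof (sum_ln_1p_le_ln_integral s _ _ N Hs (is_RInt_bernstein w N)
              ltac:(apply Rdiv_lt_0_compat; lra) Hbern) as Hint.
rewrite (Rsum_ext _ (fun i => ln (1 + s i) + -1)), Rsum_plus, Rsum_const in Hint
  by (intros; ring).
unfold Rdiv in Hint. rewrite ln_mult, ln_Rinv in Hint by (try apply Rinv_0_lt_compat; lra).
lra.
Qed.

Lemma ln_le_of_div_le x y b : 0 < x -> 0 < y -> x / y <= b -> ln x <= ln b + ln y.
Proof.
intros Hx Hy H. assert (Hxy : 0 < x / y) by (apply Rdiv_lt_0_compat; assumption).
rewrite <- ln_mult by lra. apply ln_le_compat; [exact Hx|].
apply Rmult_le_compat_r with (r := y) in H; [|lra].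
unfold Rdiv in H. rewrite Rmult_assoc, Rinv_l, Rmult_1_r in H by lra. exact H.
Qed.

Lemma BW_norm_sq N a :
  BW_norm N a * BW_norm N a = Rsum (fun i => Cnorm2 (a i) / Binomial.C N i) (S N).
Proof.
apply sqrt_sqrt, Rsum_nonneg. intros i _.
apply Rdiv_le_0_compat; [apply Cnorm2_nonneg | apply Binomial_pos].
Qed.

Lemma BW_norm_monic_pos N a : monic_deg N a -> 0 < BW_norm N a.
Proof.
intros Ha. apply sqrt_lt_R0. simpl. rewrite Ha.
assert (0 < Cnorm2 Defs.C1 / Binomial.C N N).
{ apply Rdiv_lt_0_compat; [unfold Cnorm2, Defs.C1, Cre, Cim; simpl; lra | apply Binomial_pos]. }
enough (0 <= Rsum (fun i => Cnorm2 (a i) / Binomial.C N i) N) by lra.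
apply Rsum_nonneg. intros i _.
apply Rdiv_le_0_compat; [apply Cnorm2_nonneg | apply Binomial_pos].
Qed.

Lemma ln_mu_norm_at_le N a z b : (0 < N)%nat -> monic_deg N a ->
  pderiv_eval N a z <> C0 -> mu_norm_at N a z <= b ->
  / 2 * ln (INR N) + ln (BW_norm N a) + (INR N / 2 - 1) * ln (1 + Cnorm2 z)
  <= ln b + ln (Cabs (pderiv_eval N a z)).
Proof.
intros HN Ha Hd Hmu.
pose proof (BW_norm_monic_pos N a Ha). pose proof (Cabs_pos _ Hd).
assert (0 < INR N) by (apply lt_0_INR; exact HN).
assert (0 < 1 + Cnorm2 z) by (pose proof (Cnorm2_nonneg z); lra).
assert (0 < Rpower (1 + Cnorm2 z) (INR N / 2 - 1)) by apply exp_pos.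
assert (0 < sqrt (INR N)) by (apply sqrt_lt_R0; lra).
apply ln_le_of_div_le in Hmu; [|repeat apply Rmult_lt_0_compat; lra | lra].
rewrite !ln_mult, ln_Rpower, ln_sqrt in Hmu by (try apply Rmult_lt_0_compat; lra).
lra.
Qed.

Lemma sum_ln_1p_roots_le N a zs : monic_deg N a ->
  (forall rho, 0 < rho -> Rprod (fun i => Rmax rho (Cnorm2 (nth i zs C0))) N
                          <= Rsum (fun j => Cnorm2 (a j) * rho ^ j) (S N)) ->
  Rsum (fun i => ln (1 + Cnorm2 (nth i zs C0))) N
  <= INR N + 2 * ln (BW_norm N a) - ln (INR N + 1).
Proof.
intros Ha Hprod. pose proof (BW_norm_monic_pos N a Ha).
replace (2 * ln (BW_norm N a)) with (ln (BW_norm N a * BW_norm N a)) by (rewrite ln_mult; lra).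
rewrite BW_norm_sq.
apply sum_ln_1p_le_of_prod_max_le; [intros; apply Cnorm2_nonneg | | exact Hprod].
rewrite <- BW_norm_sq. now apply Rmult_lt_0_compat.
Qed.

Lemma ln_sqrt_mul_div2 x y : 0 < x -> 0 < y ->
  ln (sqrt (x * y) / 2) = / 2 * ln x + / 2 * ln y - ln 2.
Proof.
intros Hx Hy. unfold Rdiv.
rewrite ln_mult, ln_Rinv, ln_sqrt, ln_mult
  by (try apply sqrt_lt_R0; try apply Rmult_lt_0_compat; lra).
field.
Qed.

Lemma Cprod_lin_root zs z : In z zs -> Cprod_lin zs z = C0.
Proof.
induction zs as [|r zs IH]; simpl; [tauto|]. intros [<- | Hz].
- unfold Cmul, Csub, C0, Cre, Cim; simpl. f_equal; ring.
- rewrite IH by exact Hz. unfold Cmul, C0, Cre, Cim; simpl. f_equal; ring.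
Qed.

Section RootEnergy.

Variables (N : nat) (a : nat -> Cpx) (b : R) (zs : list Cpx).
Hypothesis Hmonic : monic_deg N a.
Hypothesis Hroots : roots_of N a zs.
Hypothesis Hmu : mu_norm_le N a b.
Hypothesis Hderiv : forall i, (i < N)%nat ->
  Cabs (pderiv_eval N a (nth i zs C0)) =
  Rprod (fun j => if Nat.eq_dec i j then 1 else Cabs (Csub (nth i zs C0) (nth j zs C0))) N.
Hypothesis Hmahler : forall rho, 0 < rho ->
  Rprod (fun i => Rmax rho (Cnorm2 (nth i zs C0))) N
  <= Rsum (fun j => Cnorm2 (a j) * rho ^ j) (S N).

Lemma peval_roots i : (i < N)%nat -> peval N a (nth i zs C0) = C0.
Proof.
intros Hi. destruct Hroots as [Hlen Hp]. rewrite Hp. apply Cprod_lin_root, nth_In. lia.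
Qed.

Lemma pderiv_roots_neq0 i : (i < N)%nat -> pderiv_eval N a (nth i zs C0) <> C0.
Proof. intros Hi. exact (proj1 (Hmu _ (peval_roots i Hi))). Qed.

Lemma roots_distinct i j : (i < N)%nat -> (j < N)%nat -> i <> j -> nth i zs C0 <> nth j zs C0.
Proof.
intros Hi Hj Hij E.
pose proof (Cabs_pos _ (pderiv_roots_neq0 i Hi)) as Hpos. rewrite Hderiv in Hpos by exact Hi.
apply (Rprod_neq0 _ _ (Rgt_not_eq _ _ Hpos) j Hj).
destruct (Nat.eq_dec i j) as [|_]; [contradiction|].
rewrite E. unfold Cabs, Cnorm2, Csub, Cre, Cim; simpl.
rewrite Rminus_diag, Rminus_diag, Rmult_0_l, Rplus_0_l. exact sqrt_0.
Qed.

Lemma sum_ln_dist_roots i : (i < N)%nat ->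
  Rsum (fun j => if Nat.eq_dec i j then 0 else ln (Cabs (Csub (nth i zs C0) (nth j zs C0)))) N
  = ln (Cabs (pderiv_eval N a (nth i zs C0))).
Proof.
intros Hi. rewrite Hderiv by exact Hi. rewrite ln_Rprod.
- apply Rsum_ext. intros j _. destruct (Nat.eq_dec i j); [symmetry; apply ln_1 | reflexivity].
- intros j Hj. destruct (Nat.eq_dec i j) as [|Hij]; [lra|].
  apply Cabs_pos, Csub_neq0, roots_distinct; assumption.
Qed.

Lemma E_log_roots_le xs : stereo_preimage zs xs ->
  E_log xs <= kappa * INR N ^ 2 - INR N * ln (sqrt (INR N * (INR N + 1)) / 2) + INR N * ln b.
Proof.
intros Hpre. destruct Hroots as [Hlen _].
destruct (Nat.eq_dec N 0) as [HN0 | HN].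
{ destruct Hpre as [Hx _]. destruct xs; [|simpl in Hx; lia].
  rewrite HN0. unfold E_log; simpl. lra. }
assert (HNpos : 0 < INR N) by (apply lt_0_INR; lia).
set (L := Rsum (fun i => ln (1 + Cnorm2 (nth i zs C0))) N).
set (BW := BW_norm N a).
assert (Hrows : INR N * (/ 2 * ln (INR N) + ln BW - ln b) + (INR N / 2 - 1) * L <=
  Rsum (fun i => Rsum (fun j => if Nat.eq_dec i j then 0
                   else ln (Cabs (Csub (nth i zs C0) (nth j zs C0)))) N) N).
{ unfold L. rewrite <- Rsum_const, <- Rsum_scal, <- Rsum_plus. apply Rsum_le. intros i Hi.
  rewrite sum_ln_dist_roots by exact Hi.
  pose proof (ln_mu_norm_at_le N a _ b ltac:(lia) Hmonic (pderiv_roots_neq0 i Hi)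
                (proj2 (Hmu _ (peval_roots i Hi)))) as Hmu_i.
  fold BW in Hmu_i. lra. }
assert (HL : INR N / 2 * L <= INR N / 2 * (INR N + 2 * ln BW - ln (INR N + 1))).
{ apply Rmult_le_compat_l; [lra|]. apply sum_ln_1p_roots_le; assumption. }
rewrite (E_log_stereo_preimage N zs xs Hlen Hpre roots_distinct).
rewrite ln_sqrt_mul_div2 by lra. unfold kappa. fold L. lra.
Qed.

End RootEnergy.

From mathcomp Require Import all_boot all_order all_algebra.
From mathcomp Require Import Rstruct complex ring.
Import Order.TTheory GRing.Theory Num.Theory.

Set Implicit Arguments. Unset Strict Implicit. Unset Printing Implicit Defensive.

Local Open Scope ring_scope.

Notation CC := (complex Rdefinitions.R).

Definition toC (z : Cpx) : CC := Complex (fst z) (snd z).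

Lemma toC_Cadd z w : toC (Cadd z w) = toC z + toC w.
Proof. by case: z; case: w. Qed.

Lemma toC_Csub z w : toC (Csub z w) = toC z - toC w.
Proof. by case: z; case: w. Qed.

Lemma toC_Cmul z w : toC (Cmul z w) = toC z * toC w.
Proof. by case: z; case: w. Qed.

Lemma toC_Cpow z n : toC (Cpow z n) = toC z ^+ n.
Proof. by elim: n => [|n IH] //=; rewrite toC_Cmul IH exprS. Qed.

Lemma toC_Cscal r z : toC (Cscal r z) = r%:C%C * toC z.
Proof.
case: z => x y; apply/eqP; rewrite eq_complex /= /Cre /Cim /=.
by apply/andP; split; apply/eqP; rewrite ?RmultE; ring.
Qed.

Lemma toC_Csum f n : toC (Csum f n) = \sum_(i < n) toC (f i).
Proof. by elim: n => [|n IH]; rewrite ?big_ord0 // big_ord_recr /= toC_Cadd IH. Qed.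

Lemma toC_surj x : exists z, toC z = x.
Proof. by case: x => a b; exists (a, b). Qed.

Lemma normc_toC z : Normc.normc (toC z) = Cabs z.
Proof. by case: z => x y; rewrite /Cabs RsqrtE /Cnorm2 /Cre /Cim /= !expr2. Qed.

Lemma toC_Cprod_lin zs z :
  toC (Cprod_lin zs z) = \prod_(j < List.length zs) (toC z - toC (List.nth j zs C0)).
Proof.
elim: zs => [|r zs IH] /=; first by rewrite big_ord0.
by rewrite big_ord_recl toC_Cmul toC_Csub IH.
Qed.

Definition cpoly N (a : nat -> Cpx) : {poly CC} := \poly_(i < N.+1) toC (a i).

Lemma horner_cpoly N a z : toC (peval N a z) = (cpoly N a).[toC z].
Proof.
rewrite /peval toC_Csum (horner_coef_wide _ (size_poly _ _)).
by apply: eq_bigr => i _; rewrite toC_Cmul toC_Cpow coef_poly ltn_ord.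
Qed.

Lemma horner_deriv_cpoly N a z : toC (pderiv_eval N a z) = (cpoly N a)^`().[toC z].
Proof.
have Hsize : (size (cpoly N a)^`() <= N)%N.
  have [->|nz] := eqVneq (cpoly N a) 0; first by rewrite deriv0 size_poly0.
  by rewrite -ltnS (leq_trans (lt_size_deriv nz)) ?size_poly.
rewrite /pderiv_eval toC_Csum (horner_coef_wide _ Hsize).
apply: eq_bigr => i _.
rewrite toC_Cscal toC_Cmul toC_Cpow coef_deriv coef_poly ltnS ltn_ord mulrA -mulr_natl.
by rewrite -[INR _]/(INR i.+1) INRE rmorph_nat.
Qed.

Definition roots_poly (zs : list Cpx) : {poly CC} :=
  \prod_(j < List.length zs) ('X - (toC (List.nth j zs C0))%:P).

Lemma horner_roots_poly zs x :
  (roots_poly zs).[x] = \prod_(j < List.length zs) (x - toC (List.nth j zs C0)).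
Proof. by rewrite /roots_poly horner_prod; apply: eq_bigr => j _; rewrite hornerXsubC. Qed.

Lemma poly_horner_inj (p q : {poly CC}) : (forall x, p.[x] = q.[x]) -> p = q.
Proof.
move=> Hpq; apply/eqP; rewrite -subr_eq0; apply/eqP.
apply: (@roots_geq_poly_eq0 _ _ [seq i%:R | i <- iota 0 (size (p - q))]).
- by apply/allP => x _; rewrite /root hornerD hornerN Hpq subrr.
- by rewrite map_inj_uniq ?iota_uniq // => m n /eqP; rewrite eqr_nat => /eqP.
- by rewrite size_map size_iota.
Qed.

Lemma cpoly_roots N a zs :
  (forall z, peval N a z = Cprod_lin zs z) -> cpoly N a = roots_poly zs.
Proof.
move=> Hroots; apply: poly_horner_inj => x; have [z <-] := toC_surj x.
by rewrite -horner_cpoly Hroots toC_Cprod_lin horner_roots_poly.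
Qed.

Lemma Rprod_big f n : Rprod f n = \prod_(j < n) f j.
Proof. by elim: n => [|n IH] /=; rewrite ?big_ord0 // big_ord_recr /= IH. Qed.

Lemma Rsum_big f n : Rsum f n = \sum_(j < n) f j.
Proof. by elim: n => [|n IH] /=; rewrite ?big_ord0 // big_ord_recr /= IH. Qed.

Lemma Cabs_pderiv_root N a zs : List.length zs = N ->
  (forall z, peval N a z = Cprod_lin zs z) ->
  forall i, (i < N)%coq_nat -> Cabs (pderiv_eval N a (List.nth i zs C0)) =
  Rprod (fun j => match Nat.eq_dec i j with
                  | left _ => R1
                  | right _ => Cabs (Csub (List.nth i zs C0) (List.nth j zs C0))
                  end) N.
Proof.
move=> <- Hroots i /ssrnat.ltP Hi.
rewrite -normc_toC horner_deriv_cpoly (cpoly_roots Hroots) /roots_poly.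
rewrite (bigD1 (Ordinal Hi)) //= derivM derivXsubC mul1r hornerD hornerM hornerXsubC.
rewrite subrr mul0r addr0 horner_prod (big_morph _ (@Normc.normcM _) (@Normc.normc1 _)).
rewrite Rprod_big big_mkcond /=; apply: eq_bigr => j _.
rewrite hornerXsubC -toC_Csub normc_toC.
case: Nat.eq_dec => [Eij | Nij] /=; case: ifP => //= Hj.
- by move/eqP: Hj; case; apply/val_inj; rewrite /= Eij.
- by move/negbFE/eqP: Hj => Hj; case: Nij; rewrite Hj.
Qed.

Definition csqnorm (x : CC) : Rdefinitions.R := let: Complex u v := x in u * u + v * v.

Lemma csqnorm_conj x : (csqnorm x)%:C%C = x * x^*%C.
Proof.
case: x => u v; apply/eqP; rewrite /csqnorm RplusE !RmultE eq_complex /=.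
by apply/andP; split; apply/eqP; ring.
Qed.

Lemma csqnorm_ge0 x : 0 <= csqnorm x.
Proof. by case: x => u v; rewrite /csqnorm RplusE !RmultE addr_ge0 // -expr2 sqr_ge0. Qed.

Lemma csqnorm_toC z : csqnorm (toC z) = Cnorm2 z.
Proof. by case: z. Qed.

Lemma csqnorm0 : csqnorm 0 = 0.
Proof. by rewrite /= RplusE !RmultE mulr0 addr0. Qed.

Lemma csqnorm1 : csqnorm 1 = 1.
Proof. by rewrite /= RplusE !RmultE mulr0 addr0 mulr1. Qed.

Definition wsqnorm (q : Rdefinitions.R) n (P : {poly CC}) :=
  \sum_(j < n) csqnorm P`_j * q ^+ j.

Definition wsqnormC (q : Rdefinitions.R) n (P : {poly CC}) :=
  \sum_(j < n) P`_j * (P`_j)^*%C * q%:C%C ^+ j.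

Lemma wsqnormC_wsqnorm q n P : (wsqnorm q n P)%:C%C = wsqnormC q n P.
Proof.
rewrite /wsqnorm rmorph_sum; apply: eq_bigr => j _.
by rewrite rmorphM rmorphXn /= csqnorm_conj.
Qed.

Lemma conjcB (x y : CC) : (x - y)^*%C = x^*%C - y^*%C.
Proof. exact: rmorphB. Qed.

Lemma conjcM (x y : CC) : (x * y)^*%C = x^*%C * y^*%C.
Proof. exact: rmorphM. Qed.

Lemma coef_XsubC_mul a (S : {poly CC}) j :
  (('X - a%:P) * S)`_j = (if j == 0 then 0 else S`_j.-1) - a * S`_j.
Proof. by rewrite mulrBl coefB coefXM coefCM. Qed.

Lemma coef_1subCX_mul b (S : {poly CC}) j :
  ((1 - b%:P * 'X) * S)`_j = S`_j - b * (if j == 0 then 0 else S`_j.-1).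
Proof. by rewrite mulrBl mul1r coefB -mulrA coefCM coefXM. Qed.

Lemma wsqnorm_XsubC_normalize q n a S : a != 0 ->
  wsqnorm q n (('X - a%:P) * S) = csqnorm a * wsqnorm q n ((1 - a^-1%:P * 'X) * S).
Proof.
move=> a0; apply: complexI; rewrite rmorphM /= !wsqnormC_wsqnorm csqnorm_conj.
rewrite /wsqnormC mulr_sumr; apply: eq_bigr => j _.
rewrite coef_XsubC_mul coef_1subCX_mul !conjcB !conjcM conjc_inv.
have a0' : a^*%C != 0 by rewrite conjc_eq0.
set G := (if _ then _ else _); set F := S`_j.
by field; rewrite a0 a0'.
Qed.

Lemma wsqnorm_mulX q n (S : {poly CC}) :
  (size S < n)%N -> wsqnorm q n ('X * S) = q * wsqnorm q n S.
Proof.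
case: n => [|n] // HS.
rewrite /wsqnorm big_ord_recl coefXM eqxx csqnorm0 mul0r add0r mulr_sumr.
rewrite [in RHS]big_ord_recr /= nth_default // csqnorm0 mul0r mulr0 addr0.
by apply: eq_bigr => i _; rewrite coefXM /= exprS mulrCA.
Qed.

(* The new factor vanishes at [q / conj a], the reflection of [a] in the circle [|z|^2 = q].
   The coefficientwise defect is [(1 - |a|^2 / q) (|(X S)_j|^2 - q |S_j|^2)], which sums to
   zero by [wsqnorm_mulX]. *)
Lemma wsqnorm_XsubC_reflect (q : Rdefinitions.R) n a (S : {poly CC}) :
  0 < q -> (size S < n)%N ->
  wsqnorm q n (('X - a%:P) * S) = q * wsqnorm q n ((1 - ((a / q%:C%C)^*%C)%:P * 'X) * S).
Proof.
move=> q0 HS; set Q := q%:C%C.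
have Q0 : Q != 0 by rewrite fmorph_eq0 gt_eqF.
have HXS : wsqnormC q n ('X * S) = Q * wsqnormC q n S.
  by rewrite -!wsqnormC_wsqnorm wsqnorm_mulX // rmorphM.
apply: complexI; rewrite rmorphM /= !wsqnormC_wsqnorm -/Q.
apply/eqP; rewrite -subr_eq0 /wsqnormC mulr_sumr -sumrB.
rewrite (eq_bigr (fun j : 'I_n => (1 - a * a^*%C / Q) *
   (('X * S)`_j * (('X * S)`_j)^*%C * Q ^+ j - Q * (S`_j * (S`_j)^*%C * Q ^+ j)))).
  by rewrite -mulr_sumr sumrB -mulr_sumr -HXS subrr mulr0.
move=> j _; rewrite coef_XsubC_mul coef_1subCX_mul -coefXM.
rewrite !conjcB !conjcM conjcK !conjc_inv !conjc_real -/Q.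
set G := ('X * S)`_j; set F := S`_j.
by field.
Qed.

Lemma wsqnorm_XsubC_max q n c (S : {poly CC}) : 0 < q -> (size S < n)%N ->
  exists b, wsqnorm q n (('X - c%:P) * S)
            = Rmax q (csqnorm c) * wsqnorm q n ((1 - b%:P * 'X) * S).
Proof.
move=> q0 HS; case: (Rle_dec (csqnorm c) q) => Hc.
- by exists ((c / q%:C%C)^*%C); rewrite Rmax_left // wsqnorm_XsubC_reflect.
- have Hcq : q < csqnorm c by apply/RltP/Rnot_le_lt.
  have c0 : c != 0 by apply: contraTneq Hcq => ->; rewrite csqnorm0 ltNge ltW.
  by exists c^-1; rewrite Rmax_right ?wsqnorm_XsubC_normalize //; apply/RleP/ltW.
Qed.

Lemma wsqnorm_ge_coef0 q n (T : {poly CC}) :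
  0 <= q -> (0 < n)%N -> csqnorm T`_0 <= wsqnorm q n T.
Proof.
move=> q0; case: n => [|n] // _; rewrite /wsqnorm big_ord_recl /= expr0 mulr1 lerDl.
by apply: sumr_ge0 => i _; rewrite mulr_ge0 ?csqnorm_ge0 ?exprn_ge0.
Qed.

Lemma coef0_1subCX_mul b (T : {poly CC}) : ((1 - b%:P * 'X) * T)`_0 = T`_0.
Proof. by rewrite coef_1subCX_mul /= mulr0 subr0. Qed.

Lemma size_1subCX_mul b (T : {poly CC}) : (size ((1 - b%:P * 'X) * T)%R <= (size T).+1)%N.
Proof.
have H2 : (size (1 - b%:P * 'X : {poly CC})%R <= 2)%N.
  rewrite (leq_trans (size_polyD _ _)) // geq_max size_poly1 /= size_polyN.
  by rewrite (leq_trans (size_polyMleq _ _)) // size_polyX size_polyC; case: (b != 0).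
rewrite (leq_trans (size_polyMleq _ _)) //.
by case: (size (1 - b%:P * 'X)) H2 => [|[|[|]]] //= _; rewrite ?leqW ?leq_pred.
Qed.

(* Peeling off the roots one at a time, a root inside the circle [|z|^2 = q] is reflected
   out of it and a root outside is kept; in both cases the new factor has constant
   coefficient 1. *)
Lemma wsqnorm_prod_XsubC_ge q n (zc : nat -> CC) : 0 < q -> forall m (T : {poly CC}),
  (size T + m < n)%N ->
  csqnorm T`_0 * \prod_(j < m) Rmax q (csqnorm (zc j))
  <= wsqnorm q n (T * \prod_(j < m) ('X - (zc j)%:P)).
Proof.
move=> q0; elim => [|m IH] T HT.
  rewrite !big_ord0 !mulr1; apply: wsqnorm_ge_coef0; first exact: ltW.
  by rewrite addn0 in HT; apply: leq_ltn_trans HT.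
rewrite !big_ord_recr /=.
set Qm := \prod_(j < m) ('X - (zc j)%:P).
have -> : T * (Qm * ('X - (zc m)%:P)) = ('X - (zc m)%:P) * (T * Qm) by ring.
have HS : (size (T * Qm)%R < n)%N.
  rewrite (leq_ltn_trans (size_polyMleq _ _)) // size_prod_XsubC [index_enum _]unlock.
  by rewrite -enumT size_enum_ord addnS /= (leq_ltn_trans _ HT) // addnS.
have [b ->] := wsqnorm_XsubC_max (zc m) q0 HS.
rewrite mulrA [_ * Rmax _ _]mulrC ler_wpM2l //.
  by apply/RleP; apply: Rle_trans (Rmax_l _ _); apply/RleP/ltW.
rewrite mulrA -(coef0_1subCX_mul b T); apply: IH.
by apply: leq_ltn_trans HT; rewrite addnS -addSn leq_add2r size_1subCX_mul.
Qed.

Lemma prod_max_Cnorm2_roots_le N a zs : List.length zs = N ->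
  (forall z, peval N a z = Cprod_lin zs z) -> forall rho, Rlt R0 rho ->
  Rle (Rprod (fun i => Rmax rho (Cnorm2 (List.nth i zs C0))) N)
      (Rsum (fun j => Rmult (Cnorm2 (a j)) (pow rho j)) (S N)).
Proof.
move=> <- Hroots rho /RltP rho0; apply/RleP.
have := wsqnorm_prod_XsubC_ge (fun j => toC (List.nth j zs C0)) rho0 (T := 1)
          (n := (List.length zs).+2) (m := List.length zs).
rewrite size_poly1 coef1 csqnorm1 !mul1r -/(roots_poly zs) -(cpoly_roots Hroots).
move=> /(_ (ltnSn _)) Hle; rewrite Rprod_big Rsum_big.
under eq_bigr => j _ do rewrite -csqnorm_toC.
apply: (le_trans Hle); rewrite /wsqnorm big_ord_recr /= coef_poly ltnn csqnorm0 mul0r addr0.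
by under eq_bigr => j _ do rewrite coef_poly ltn_ord csqnorm_toC -RpowE.
Qed.

Close Scope ring_scope.
Open Scope R_scope.

Theorem theorem3p2
  (B : nat -> R) (HB : forall N : nat, 0 < B N)
  (p : nat -> (nat -> Cpx))
  (Hmonic : forall N : nat, monic_deg N (p N))
  (Hmu : forall N : nat, mu_norm_le N (p N) (B N)) :
  forall (N : nat) (zs : list Cpx) (xs : list R3),
    roots_of N (p N) zs ->
    stereo_preimage zs xs ->
    E_log xs <= kappa * INR N ^ 2
                - INR N * ln (sqrt (INR N * (INR N + 1)) / 2)
                + INR N * ln (B N).
Proof.
move=> N zs xs Hroots Hpre; have [Hlen Hp] := Hroots.
apply: (E_log_roots_le _ _ _ _ (Hmonic N) Hroots (Hmu N) _ _ _ Hpre).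
- exact: Cabs_pderiv_root Hlen Hp.
- exact: prod_max_Cnorm2_roots_le Hlen Hp.
Qed.
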